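(* For every $\eta>0$ there exist $\rho=\rho(\eta)>0$ and $n_0$ such that the following holds for all $n\ge n_0$. Let $P,Q\subseteq[n]$ be disjoint subsets, put $p=|P|/n$, $q=|Q|/n$, and suppose $p\ge q$ and $\eta\le p\le1-\eta$. Let $0\le b\le a\le(1-\eta)n$ be integers, and let $A,B\subseteq[n]$ be disjoint sets with $|A|=a$, $|B|=b$, chosen uniformly at random among all such pairs of subsets of $[n]$. Let $Z:=|A\cap P|-|A\cap Q|-|B\cap P|+|B\cap Q|$. Then $\mathbb{P}[Z\ge\rho\sqrt{a}]\ge\rho$. *)

From HB Require Import structures.
From mathcomp Require Import all_boot all_order all_algebra.
From mathcomp Require Import reals.
Set Implicit Arguments. Unset Strict Implicit. Unset Printing Implicit Defensive.
Import Order.TTheory GRing.Theory Num.Theory.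
Local Open Scope ring_scope.

Definition disj_pairs (n a b : nat) : {set {set 'I_n} * {set 'I_n}} :=
  [set AB : {set 'I_n} * {set 'I_n} | [&& #|AB.1| == a, #|AB.2| == b & [disjoint AB.1 & AB.2]]].

Definition unif_prob (R : realType) (n a b : nat)
  (E : pred ({set 'I_n} * {set 'I_n})) : R :=
  #|[set AB in disj_pairs n a b | E AB]|%:R / #|disj_pairs n a b|%:R.

Definition Zstat (n : nat) (P Q A B : {set 'I_n}) : int :=
  (#|A :&: P|%:Z - #|A :&: Q|%:Z - #|B :&: P|%:Z + #|B :&: Q|%:Z)%R.

(* Write Z = sum_z h(z) w(z) with h = 1_P - 1_Q and w = 1_A - 1_B, and let
   mu = E Z, which is nonnegative because |P| >= |Q| and a >= b.  The law of
   (A, B) is invariant under relabelling [n], so the first two moments of the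
   linear statistics sum_z h(z) 1_A(z) and sum_z h(z) 1_B(z) are determined by
   the one- and two-point inclusion counts; this gives E (Z - mu)^2 <= 4 a.
   For a lower bound on E |Z - mu|, match about eta n points x of P with points
   y outside P and apply each transposition (x y) to (A, B) independently with
   probability 1/2: this preserves the law of (A, B), and conditionally on
   (A, B) it adds to Z a sum of independent terms xi_i d_i with
   sum_i E d_i^2 >= 2 eta^2 a.  A fourth-moment (Khintchine-type) bound for such
   sums gives E |Z - mu| >= eta^2 sqrt a / 8, and since Z - mu is centred, a
   Paley-Zygmund-type argument turns the first absolute and second moments into
   P [Z - mu >= eta^2 sqrt a / 32] >= eta^4 / 4096, so rho = eta^4 / 4096
   works. *)

From HB Require Import structures.
From mathcomp Require Import all_boot all_order all_algebra.
From mathcomp Require Import reals.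
From mathcomp Require Import ring lra zify.
From mathcomp Require Import perm.
Set Implicit Arguments. Unset Strict Implicit. Unset Printing Implicit Defensive.
Import Order.TTheory GRing.Theory Num.Theory.
Local Open Scope ring_scope.

Section SubsetSumAverage.
Variable R : realFieldType.
Implicit Types (cs : seq R) (phi psi : R -> R).

(* The mean of [phi (\sum_(c <- S) c)] over the [2 ^ size cs] subsequences
   [S] of [cs], i.e. [E phi (\sum_i xi_i c_i)] for independent fair bits [xi_i]. *)
Fixpoint subsum_avg cs phi : R :=
  if cs is c :: cs' then (subsum_avg cs' phi + subsum_avg cs' (fun y => phi (c + y))) / 2
  else phi 0.

Lemma eq_subsum_avg cs phi psi : phi =1 psi -> subsum_avg cs phi = subsum_avg cs psi.
Proof.
elim: cs phi psi => [|c cs IH] phi psi eq_phi /=; first exact: eq_phi.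
by rewrite (IH phi psi eq_phi) (IH (fun y => phi (c + y)) (fun y => psi (c + y))) // => y.
Qed.

Lemma ler_subsum_avg cs phi psi :
  (forall y, phi y <= psi y) -> subsum_avg cs phi <= subsum_avg cs psi.
Proof.
elim: cs phi psi => [|c cs IH] phi psi le_phi /=; first exact: le_phi.
by rewrite ler_pM2r ?invr_gt0 ?ltr0n // lerD ?IH // => y; apply: le_phi.
Qed.

Lemma subsum_avg_lin cs phi psi (k l : R) :
  subsum_avg cs (fun y => k * phi y + l * psi y) = k * subsum_avg cs phi + l * subsum_avg cs psi.
Proof.
elim: cs phi psi => [|c cs IH] phi psi //=.
by rewrite IH (IH (fun y => phi (c + y))); ring.
Qed.

Lemma subsum_avg_compl cs phi :
  subsum_avg cs phi = subsum_avg cs (fun y => phi (\sum_(c <- cs) c - y)).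
Proof.
elim: cs phi => [|c cs IH] phi /=; first by rewrite big_nil subr0.
rewrite big_cons (IH phi) (IH (fun y => phi (c + y))) addrC.
by congr ((_ + _) / 2); apply: eq_subsum_avg => y; congr phi; ring.
Qed.

(* Variance and fourth central moment of the random subset sum. *)
Definition subsum_var cs : R := \sum_(c <- cs) (c / 2) ^+ 2.

Fixpoint subsum_m4 cs : R :=
  if cs is c :: cs' then
    subsum_m4 cs' + 6 * (c / 2) ^+ 2 * subsum_var cs' + (c / 2) ^+ 4
  else 0.

Lemma subsum_var_ge0 cs : 0 <= subsum_var cs.
Proof. by apply: sumr_ge0 => c _; apply: sqr_ge0. Qed.

Lemma subsum_avg_centered_quartic cs (a0 a1 a2 a3 a4 : R) :
  subsum_avg cs (fun y => let x := y - (\sum_(c <- cs) c) / 2 in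
                          a0 + a1 * x + a2 * x ^+ 2 + a3 * x ^+ 3 + a4 * x ^+ 4)
  = a0 + a2 * subsum_var cs + a4 * subsum_m4 cs.
Proof.
elim: cs a0 a1 a2 a3 a4 => [|c cs IH] a0 a1 a2 a3 a4 /=.
  by rewrite /subsum_var !big_nil; ring.
rewrite /subsum_var !big_cons -/(subsum_var cs).
set T := \sum_(c <- cs) c; set h := c / 2.
(* Expand both shifted polynomials around the centre [T / 2] of the tail. *)
rewrite (@eq_subsum_avg cs _ (fun y => (a0 - a1 * h + a2 * h ^+ 2 - a3 * h ^+ 3 + a4 * h ^+ 4)
   + (a1 - 2 * a2 * h + 3 * a3 * h ^+ 2 - 4 * a4 * h ^+ 3) * (y - T / 2)
   + (a2 - 3 * a3 * h + 6 * a4 * h ^+ 2) * (y - T / 2) ^+ 2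
   + (a3 - 4 * a4 * h) * (y - T / 2) ^+ 3 + a4 * (y - T / 2) ^+ 4)); last first.
  by move=> y; rewrite /h; ring.
rewrite IH (@eq_subsum_avg cs _ (fun y => (a0 + a1 * h + a2 * h ^+ 2 + a3 * h ^+ 3 + a4 * h ^+ 4)
   + (a1 + 2 * a2 * h + 3 * a3 * h ^+ 2 + 4 * a4 * h ^+ 3) * (y - T / 2)
   + (a2 + 3 * a3 * h + 6 * a4 * h ^+ 2) * (y - T / 2) ^+ 2
   + (a3 + 4 * a4 * h) * (y - T / 2) ^+ 3 + a4 * (y - T / 2) ^+ 4)); last first.
  by move=> y; rewrite /h; field.
by rewrite IH /h; field.
Qed.

Lemma subsum_m4_le cs : subsum_m4 cs <= 3 * subsum_var cs ^+ 2.
Proof.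
elim: cs => [|c cs IH] /=; first by rewrite /subsum_var big_nil; lra.
rewrite /subsum_var !big_cons -/(subsum_var cs).
have h2 : 0 <= (c / 2) ^+ 2 by apply: sqr_ge0.
have -> : (c / 2) ^+ 4 = ((c / 2) ^+ 2) ^+ 2 by rewrite -exprM.
nra.
Qed.

(* For [t = `|z|] the difference is [t (t - L) ^ 2 (t + 2 L) / (2 L ^ 3) >= 0]. *)
Lemma norm_ge_quartic (L z : R) :
  0 < L -> 3 / (2 * L) * z ^+ 2 - 1 / (2 * L ^+ 3) * z ^+ 4 <= `|z|.
Proof.
move=> L_gt0; have z2 : z ^+ 2 = `|z| ^+ 2 by rewrite real_normK ?num_real.
have -> : z ^+ 4 = (z ^+ 2) ^+ 2 by rewrite -exprM.
rewrite z2.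
set t := `|z|; have t_ge0 : 0 <= t := normr_ge0 z.
rewrite -subr_ge0.
have -> : t - (3 / (2 * L) * t ^+ 2 - 1 / (2 * L ^+ 3) * (t ^+ 2) ^+ 2)
          = t * ((t - L) ^+ 2 * (t + 2 * L)) / (2 * L ^+ 3).
  by field; rewrite gt_eqF.
have L_ge0 := ltW L_gt0.
apply: divr_ge0; last by rewrite mulr_ge0 // exprn_ge0.
by rewrite mulr_ge0 // mulr_ge0 ?sqr_ge0 // addr_ge0 // mulr_ge0.
Qed.

Lemma subsum_avg_norm_centered_ge cs (L : R) : 0 < L ->
  3 / (2 * L) * subsum_var cs - 1 / (2 * L ^+ 3) * subsum_m4 cs
  <= subsum_avg cs (fun y => `|y - (\sum_(c <- cs) c) / 2|).
Proof.
move=> L_gt0.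
have := subsum_avg_centered_quartic cs 0 0 (3 / (2 * L)) 0 (- (1 / (2 * L ^+ 3))).
rewrite /= add0r mulNr -/(_ - _) => <-.
by apply: ler_subsum_avg => y; have := norm_ge_quartic (y - (\sum_(c <- cs) c) / 2) L_gt0; lra.
Qed.

(* The subset sum is symmetric about its mean, so shifting by [c0] cannot
   bring it closer to [0] on average. *)
Lemma subsum_avg_norm_shift_ge cs (c0 : R) :
  subsum_avg cs (fun y => `|y - (\sum_(c <- cs) c) / 2|)
  <= subsum_avg cs (fun y => `|c0 + y|).
Proof.
set T := \sum_(c <- cs) c.
have -> : subsum_avg cs (fun y => `|c0 + y|)
          = 1 / 2 * subsum_avg cs (fun y => `|c0 + y|)
            + 1 / 2 * subsum_avg cs (fun y => `|c0 + (T - y)|).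
  by rewrite -(subsum_avg_compl cs (fun y => `|c0 + y|)); field.
rewrite -subsum_avg_lin; apply: ler_subsum_avg => y.
have := ler_normB (c0 + y) (c0 + (T - y)).
have -> : c0 + y - (c0 + (T - y)) = 2 * (y - T / 2) by field.
rewrite normrM ger0_norm //; lra.
Qed.

Lemma subsum_avg_norm_ge cs (c0 L : R) : 0 < L -> subsum_var cs <= L ^+ 2 / 4 ->
  9 / (8 * L) * subsum_var cs <= subsum_avg cs (fun y => `|c0 + y|).
Proof.
move=> L_gt0 var_le.
apply: le_trans (subsum_avg_norm_shift_ge cs c0).
apply: le_trans (subsum_avg_norm_centered_ge cs L_gt0).
have m4_le : subsum_m4 cs <= 3 * (L ^+ 2 / 4) * subsum_var cs.
  apply: le_trans (subsum_m4_le cs) _; rewrite expr2 mulrA ler_wpM2r ?subsum_var_ge0 //.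
  by rewrite ler_pM2l.
have c_ge0 : 0 <= 1 / (2 * L ^+ 3) by rewrite divr_ge0 // mulr_ge0 // exprn_ge0 // ltW.
have := ler_wpM2l c_ge0 m4_le.
have -> : 1 / (2 * L ^+ 3) * (3 * (L ^+ 2 / 4) * subsum_var cs)
          = 3 / (2 * L) * subsum_var cs - 9 / (8 * L) * subsum_var cs.
  by field; rewrite gt_eqF.
lra.
Qed.

End SubsetSumAverage.

Lemma sum_natr_card (R : pzSemiRingType) (T : finType) (D : {set T}) (E : pred T) :
  \sum_(x in D) (E x)%:R = #|[set x in D | E x]|%:R :> R.
Proof.
rewrite -sum1_card natr_sum [LHS]big_mkcond [RHS]big_mkcond /=.
by apply: eq_bigr => x _; rewrite !inE; case: (x \in D); case: (E x).
Qed.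

(* Above the threshold [t], AM-GM gives [X <= X ^ 2 / (2 c) + c / 2]; summing
   the bound [X^+ <= t + X ^ 2 / (2 c) + [t <= X] c / 2] with [c = 4 sigma / kap]
   and [E X^+ = E |X| / 2] yields the claim. *)
Lemma card_upper_tail_ge (R : realFieldType) (T : finType) (D : {set T}) (X : T -> R)
    (sigma kap : R) :
  0 < sigma -> 0 < kap -> \sum_(x in D) X x = 0 ->
  \sum_(x in D) X x ^+ 2 <= sigma ^+ 2 * #|D|%:R ->
  kap * sigma * #|D|%:R <= \sum_(x in D) `|X x| ->
  kap ^+ 2 / 16 * #|D|%:R <= #|[set x in D | kap * sigma / 4 <= X x]|%:R.
Proof.
move=> sigma_gt0 kap_gt0 sum_X sum_X2 sum_absX.
set t := kap * sigma / 4; set c := 4 * sigma / kap; set N : R := #|D|%:R.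
have c_gt0 : 0 < c by rewrite divr_gt0 ?mulr_gt0.
have c2_gt0 : 0 < 2 * c by rewrite mulr_gt0.
have c2_ge0 := ltW c2_gt0.
have pos_part x : (`|X x| + X x) / 2 <= t + X x ^+ 2 / (2 * c) + (t <= X x)%R%:R * (c / 2).
  have sq_ge0 : 0 <= X x ^+ 2 / (2 * c) by rewrite divr_ge0 ?sqr_ge0.
  have amgm : X x <= X x ^+ 2 / (2 * c) + c / 2.
    have -> : X x ^+ 2 / (2 * c) + c / 2 = X x + (X x - c) ^+ 2 / (2 * c).
      by field; rewrite gt_eqF.
    by rewrite lerDl divr_ge0 ?sqr_ge0.
  have t_ge0 : 0 <= t by rewrite divr_ge0 // mulr_ge0 ?ltW.
  have [tX|Xt] := lerP t (X x); rewrite /= ?mul1r ?mul0r.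
    by rewrite ger0_norm ?(le_trans t_ge0) //; lra.
  by case: (lerP 0 (X x)) => [X_ge0|X_lt0]; [rewrite ger0_norm | rewrite ltr0_norm]; lra.
have := ler_sum (index_enum T) (fun x (_ : x \in D) => pos_part x).
rewrite -mulr_suml big_split /= sum_X addr0 !big_split /= sumr_const -[t *+ _]mulr_natr.
rewrite -!mulr_suml sum_natr_card -/N; set G := #|_|%:R => key.
have sq_term : (\sum_(x in D) X x ^+ 2) / (2 * c) <= kap * sigma * N / 8.
  have -> : kap * sigma * N / 8 = sigma ^+ 2 * N / (2 * c) by rewrite /c; field; rewrite !gt_eqF.
  by rewrite ler_pM2r ?invr_gt0.
have main : kap * sigma * N / 8 <= c / 2 * G by rewrite /t in key; lra.
have -> : kap ^+ 2 / 16 * N = kap / (2 * sigma) * (kap * sigma * N / 8) by field; rewrite gt_eqF.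
have -> : G = kap / (2 * sigma) * (c / 2 * G) by rewrite /c; field; rewrite !gt_eqF.
by rewrite ler_pM2l ?divr_gt0 ?mulr_gt0.
Qed.

Lemma exists_subset_card (T : finType) (D : {set T}) k :
  (k <= #|D|)%N -> exists2 A : {set T}, A \subset D & #|A| = k.
Proof.
case/card_geqP => s [s_uniq s_size sD]; exists [set x in s].
  by apply/subsetP => x; rewrite inE; apply: sD.
by rewrite cardsE -s_size; apply/card_uniqP.
Qed.

Lemma card_disj_pairs_gt0 n a b : (a + b <= n)%N -> (0 < #|disj_pairs n a b|)%N.
Proof.
move=> abn.
have [A _ cardA] : exists2 A : {set 'I_n}, A \subset setT & #|A| = a.
  by apply: exists_subset_card; rewrite cardsT card_ord; lia.
have [B BA cardB] : exists2 B : {set 'I_n}, B \subset ~: A & #|B| = b.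
  by apply: exists_subset_card; rewrite cardsCs setCK card_ord cardA; lia.
apply/card_gt0P; exists (A, B).
by rewrite inE /= cardA cardB !eqxx disjoint_sym disjoints_subset.
Qed.

Lemma sum_delta (R : pzSemiRingType) (I : finType) (G : I -> R) (i : I) :
  \sum_j (i == j)%:R * G j = G i.
Proof.
rewrite (bigD1 i) //= eqxx mul1r big1 ?addr0 // => j /negbTE.
by rewrite eq_sym => ->; rewrite mul0r.
Qed.

Section Exchangeability.
Variables (R : realFieldType) (n a b : nat).
Local Notation T := 'I_n.
Local Notation Om := (disj_pairs n a b).
Local Notation cOm := (#|Om|%:R : R).

Definition relabel (s : {perm T}) (om : {set T} * {set T}) : {set T} * {set T} :=
  (s @^-1: om.1, s @^-1: om.2).

Lemma relabel_disj_pairs s om : om \in Om -> relabel s om \in Om.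
Proof.
rewrite !inE /= !card_preimset; try exact: perm_inj.
by rewrite -!setI_eq0 -preimsetI -!cards_eq0 card_preimset //; exact: perm_inj.
Qed.

Lemma relabel_tpermK x y : involutive (relabel (tperm x y)).
Proof. by case=> A B; congr (_, _); apply/setP => z; rewrite !inE tpermK. Qed.

Lemma sum_relabel_tperm x y (F : {set T} * {set T} -> R) :
  \sum_(om in Om) F om = \sum_(om in Om) F (relabel (tperm x y) om).
Proof.
rewrite (reindex_inj (inv_inj (relabel_tpermK x y))); apply: eq_bigl => om.
apply/idP/idP; last exact: relabel_disj_pairs.
by rewrite -{2}(relabel_tpermK x y om); apply: relabel_disj_pairs.
Qed.

Definition indic (z : T) (A : {set T}) : R := (z \in A)%:R.

Lemma sum_indic (A : {set T}) : \sum_z indic z A = #|A|%:R.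
Proof.
rewrite -sum1_card natr_sum [RHS]big_mkcond /=; apply: eq_bigr => z _.
by rewrite /indic; case: (z \in A).
Qed.

Lemma indicM_id z A : indic z A * indic z A = indic z A.
Proof. by rewrite /indic; case: (z \in A); rewrite ?mulr1 ?mulr0. Qed.

Lemma indic_ge0 z A : 0 <= indic z A.
Proof. exact: ler0n. Qed.

Variable sel : bool.

Definition side (om : {set T} * {set T}) := if sel then om.1 else om.2.
Definition side_size := if sel then a else b.

Lemma side_relabel s om : side (relabel s om) = s @^-1: side om.
Proof. by rewrite /side; case: sel. Qed.

Lemma card_side om : om \in Om -> #|side om| = side_size.
Proof. by rewrite inE => /and3P[/eqP cA /eqP cB _]; rewrite /side /side_size; case: sel. Qed.

Definition cnt1 z := \sum_(om in Om) indic z (side om).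
Definition cnt2 z z' := \sum_(om in Om) indic z (side om) * indic z' (side om).

Lemma cnt1_const x y : cnt1 x = cnt1 y.
Proof.
rewrite /cnt1 (sum_relabel_tperm x y); apply: eq_bigr => om _.
by rewrite side_relabel /indic inE tpermL.
Qed.

Lemma cnt1E z : cnt1 z = side_size%:R / n%:R * cOm.
Proof.
have n_neq0 : (n%:R : R) != 0 by rewrite pnatr_eq0 -lt0n (leq_ltn_trans _ (ltn_ord z)).
have sum_cnt1 : \sum_x cnt1 x = side_size%:R * cOm.
  rewrite /cnt1 exchange_big /= (eq_bigr (fun _ => side_size%:R)).
    by rewrite sumr_const mulr_natr.
  by move=> om om_in; rewrite sum_indic card_side.
have sum_const : \sum_x cnt1 x = n%:R * cnt1 z.
  rewrite (eq_bigr (fun _ => cnt1 z)) => [|x _]; last exact: cnt1_const.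
  by rewrite sumr_const card_ord mulr_natl.
by apply: (mulfI n_neq0); rewrite -sum_const sum_cnt1; field.
Qed.

Lemma cnt2_tperm x y z z' : cnt2 z z' = cnt2 (tperm x y z) (tperm x y z').
Proof.
rewrite /cnt2 (sum_relabel_tperm x y); apply: eq_bigr => om _.
by rewrite side_relabel /indic !inE.
Qed.

Lemma cnt2_const z z' u u' : z != z' -> u != u' -> cnt2 z z' = cnt2 u u'.
Proof.
move=> zz' uu'; rewrite (cnt2_tperm z u) tpermL.
set y := tperm z u z'.
have uy : u != y by rewrite /y -(inj_eq (@perm_inj _ (tperm z u))) tpermR tpermK.
by rewrite (cnt2_tperm y u') tpermL tpermD // eq_sym.
Qed.

Lemma cnt2_diag z : cnt2 z z = cnt1 z.
Proof. by apply: eq_bigr => om _; rewrite indicM_id. Qed.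

Lemma cnt2_ge0 z z' : 0 <= cnt2 z z'.
Proof. by apply: sumr_ge0 => om _; rewrite mulr_ge0 ?indic_ge0. Qed.

Lemma sum_cnt2 : \sum_z \sum_z' cnt2 z z' = side_size%:R ^+ 2 * cOm.
Proof.
rewrite /cnt2; under eq_bigr do rewrite exchange_big /=.
rewrite exchange_big /= (eq_bigr (fun _ => side_size%:R ^+ 2)).
  by rewrite sumr_const mulr_natr.
move=> om om_in; rewrite -(card_side om_in) -sum_indic expr2 mulr_suml.
by apply: eq_bigr => z _; rewrite mulr_sumr.
Qed.

(* Off-diagonal counts are all equal, and the row sums of [cnt2] are known. *)
Lemma cnt2_offdiag z z' : z != z' ->
  n%:R * (n%:R - 1) * cnt2 z z' = (side_size%:R ^+ 2 - side_size%:R) * cOm.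
Proof.
move=> zz'.
have row u : \sum_u' cnt2 u u' = cnt1 u + (n%:R - 1) * cnt2 z z'.
  rewrite (bigD1 u) //= cnt2_diag; congr (_ + _).
  rewrite (eq_bigr (fun _ => cnt2 z z')); last first.
    by move=> u' uu'; apply: cnt2_const; rewrite // eq_sym.
  have n_gt0 : (0 < n)%N by apply: leq_ltn_trans (ltn_ord z).
  rewrite (eq_bigl (mem [set~ u])) => [|i]; last by rewrite !inE.
  by rewrite sumr_const cardsC1 card_ord -[_ *+ _]mulr_natl -subn1 natrB.
have := sum_cnt2; rewrite (eq_bigr _ (fun u _ => row u)) big_split /=.
rewrite (eq_bigr _ (fun u _ => cnt1E u)) !sumr_const card_ord.
rewrite -[(_ * cOm) *+ n]mulr_natl -[(_ * cnt2 z z') *+ n]mulr_natl => sum_eq.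
have n_neq0 : (n%:R : R) != 0 by rewrite pnatr_eq0 -lt0n; apply: leq_ltn_trans (ltn_ord z).
by rewrite mulrBl -sum_eq; field.
Qed.

Lemma cnt2_le z z' : z != z' -> (side_size <= n)%N ->
  cnt2 z z' <= cOm * (side_size%:R / n%:R) ^+ 2.
Proof.
move=> zz' kn.
have n_gt1 : (1 < n)%N.
  by have := ltn_ord z; have := ltn_ord z'; move: zz'; rewrite -val_eqE /=; lia.
set M : R := n%:R; set K : R := side_size%:R; set c2 := cnt2 z z'.
have M_gt1 : 1 < M by rewrite ltr1n.
have K_ge0 : 0 <= K by rewrite ler0n.
have KM : K <= M by rewrite ler_nat.
have cOm_ge0 : 0 <= cOm by rewrite ler0n.
have E := cnt2_offdiag zz'; rewrite -/M -/K -/c2 in E.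
have key : (M - 1) * (cOm * K ^+ 2 - c2 * M ^+ 2) = cOm * K * (M - K).
  have -> : (M - 1) * (cOm * K ^+ 2 - c2 * M ^+ 2)
            = (M - 1) * cOm * K ^+ 2 - M * (M * (M - 1) * c2) by ring.
  by rewrite E; ring.
rewrite expr_div_n mulrA ler_pdivlMr ?exprn_gt0 ?(lt_trans ltr01) // -subr_ge0.
rewrite -(pmulr_rge0 _ (_ : 0 < M - 1)) ?subr_gt0 // key.
by rewrite mulr_ge0 ?mulr_ge0 // subr_ge0.
Qed.

Definition linstat (phi : T -> R) om := \sum_z phi z * indic z (side om).

Lemma sum_linstat phi :
  \sum_(om in Om) linstat phi om = side_size%:R / n%:R * cOm * \sum_z phi z.
Proof.
rewrite /linstat exchange_big mulr_sumr /=; apply: eq_bigr => z _.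
by rewrite -mulr_sumr -/(cnt1 z) cnt1E mulrC.
Qed.

Lemma sum_linstat_sq phi :
  \sum_(om in Om) linstat phi om ^+ 2 = \sum_z \sum_z' phi z * phi z' * cnt2 z z'.
Proof.
rewrite /linstat; under eq_bigr do rewrite expr2 mulr_suml.
under eq_bigr do under eq_bigr do rewrite mulr_sumr.
rewrite exchange_big /=; apply: eq_bigr => z _.
rewrite exchange_big /=; apply: eq_bigr => z' _.
by rewrite /cnt2 mulr_sumr; apply: eq_bigr => om _; ring.
Qed.

Lemma linstat_var phi : (1 < n)%N -> (side_size <= n)%N ->
  \sum_(om in Om) (linstat phi om - side_size%:R / n%:R * \sum_z phi z) ^+ 2
    <= side_size%:R / n%:R * cOm * \sum_z phi z ^+ 2.
Proof.
move=> n_gt1 kn.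
pose z0 : T := Ordinal (ltnW n_gt1); pose z1 : T := Ordinal n_gt1.
set r := side_size%:R / n%:R; set S1 := \sum_z phi z; set S2 := \sum_z phi z ^+ 2.
set c2 := cnt2 z0 z1.
have cnt2E u u' : cnt2 u u' = c2 + (u == u')%:R * (r * cOm - c2).
  have [<-|uu'] := eqVneq u u'; first by rewrite /= cnt2_diag cnt1E -/r; ring.
  by rewrite mul0r addr0; apply: cnt2_const.
have sum_sq : \sum_(om in Om) linstat phi om ^+ 2 = c2 * S1 ^+ 2 + (r * cOm - c2) * S2.
  rewrite sum_linstat_sq.
  under eq_bigr => z _.
    rewrite (eq_bigr (fun z' => phi z * c2 * phi z'
                               + (z == z')%:R * (phi z * phi z' * (r * cOm - c2)))); last first.
      by move=> z' _; rewrite cnt2E; ring.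
    rewrite big_split /= sum_delta -mulr_sumr -/S1.
  over.
  have -> : S2 = \sum_z phi z * phi z by apply: eq_bigr => z _; rewrite expr2.
  by rewrite big_split /= -!mulr_suml -/S1; ring.
have -> : \sum_(om in Om) (linstat phi om - r * S1) ^+ 2
          = \sum_(om in Om) linstat phi om ^+ 2
            - 2 * (r * S1) * \sum_(om in Om) linstat phi om + (r * S1) ^+ 2 * cOm.
  transitivity (\sum_(om in Om)
    (linstat phi om ^+ 2 - 2 * (r * S1) * linstat phi om + (r * S1) ^+ 2)).
    by apply: eq_bigr => om _; ring.
  by rewrite big_split sumrB /= -mulr_sumr sumr_const mulr_natr.
rewrite sum_sq sum_linstat -/r -/S1.
have c2_le : c2 <= cOm * r ^+ 2 by apply: cnt2_le.
have c2_ge0 : 0 <= c2 := cnt2_ge0 z0 z1.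
have S2_ge0 : 0 <= S2 by apply: sumr_ge0 => z _; apply: sqr_ge0.
have : 0 <= (cOm * r ^+ 2 - c2) * S1 ^+ 2 by rewrite mulr_ge0 ?sqr_ge0 // subr_ge0.
have : 0 <= c2 * S2 by rewrite mulr_ge0.
nra.
Qed.

End Exchangeability.

Section Pairings.
Variable n : nat.
Local Notation T := 'I_n.

Lemma sum_pairs_le (R : numDomainType) (s : seq (T * T)) (f : T -> R) :
  uniq (unzip1 s ++ unzip2 s) -> (forall z, 0 <= f z) ->
  \sum_(q <- s) (f q.1 + f q.2) <= \sum_z f z.
Proof.
move=> uniq_s f_ge0.
rewrite big_split /= -(big_map fst xpredT) -(big_map snd xpredT) -big_cat big_uniq //=.
by rewrite [leRHS](bigID (mem (unzip1 s ++ unzip2 s))) /= lerDl sumr_ge0.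
Qed.

Definition pairing (P : {set T}) : seq (T * T) :=
  let m := minn #|P| #|~: P| in zip (take m (enum P)) (take m (enum (~: P))).

Variable P : {set T}.

Lemma size_pairing : size (pairing P) = minn #|P| #|~: P|.
Proof. by rewrite size_zip !size_takel -?cardE ?geq_minl ?geq_minr ?minnn. Qed.

Lemma unzip1_pairing : unzip1 (pairing P) = take (minn #|P| #|~: P|) (enum P).
Proof. by rewrite unzip1_zip // !size_takel -?cardE ?geq_minl ?geq_minr. Qed.

Lemma unzip2_pairing : unzip2 (pairing P) = take (minn #|P| #|~: P|) (enum (~: P)).
Proof. by rewrite unzip2_zip // !size_takel -?cardE ?geq_minl ?geq_minr. Qed.

Lemma pairing_uniq : uniq (unzip1 (pairing P) ++ unzip2 (pairing P)).
Proof.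
rewrite unzip1_pairing unzip2_pairing cat_uniq !take_uniq ?enum_uniq //= andbT.
apply/hasPn => z /mem_take; rewrite mem_enum inE => zP.
by apply/negP => /mem_take; rewrite mem_enum (negbTE zP).
Qed.

Lemma mem_pairing q : q \in pairing P -> q.1 \in P /\ q.2 \notin P.
Proof.
move=> qs; have := map_f fst qs; have := map_f snd qs.
rewrite -/(unzip1 _) -/(unzip2 _) unzip1_pairing unzip2_pairing.
by move=> /mem_take q2P /mem_take q1P; move: q1P q2P; rewrite !mem_enum inE.
Qed.

End Pairings.

Section Swaps.
Variables (R : realFieldType) (n a b : nat).
Local Notation T := 'I_n.
Local Notation Om := (disj_pairs n a b).
Variables P Q : {set T}.

Definition hPQ (z : T) : R := indic R z P - indic R z Q.
Definition wAB (om : {set T} * {set T}) (z : T) : R := indic R z om.1 - indic R z om.2.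

Definition zstat om := \sum_z hPQ z * wAB om z.

Lemma Zstat_zstat (A B : {set T}) : (Zstat P Q A B)%:~R = zstat (A, B).
Proof.
have cardI (C D : {set T}) : (#|C :&: D|%:Z)%:~R = \sum_z indic R z C * indic R z D.
  rewrite -pmulrn -sum_indic; apply: eq_bigr => z _.
  by rewrite /indic inE; case: (z \in C); case: (z \in D); rewrite ?mulr1 ?mulr0.
rewrite /Zstat intrD !intrB !cardI /zstat -!sumrB -big_split /=.
by apply: eq_bigr => z _; rewrite /hPQ /wAB /=; ring.
Qed.

Definition swap_gain (p : T * T) om := (wAB om p.2 - wAB om p.1) * (hPQ p.1 - hPQ p.2).

Lemma wAB_relabel s om z : wAB (relabel s om) z = wAB om (s z).
Proof. by rewrite /wAB /indic !inE. Qed.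

Lemma zstat_relabel_tperm x y om : x != y ->
  zstat (relabel (tperm x y) om) = zstat om + swap_gain (x, y) om.
Proof.
move=> xy; rewrite /zstat.
under eq_bigr do rewrite wAB_relabel.
rewrite (reindex_inj (@perm_inj _ (tperm x y))) /=.
under eq_bigr do rewrite tpermK.
have hPQ_tperm z : hPQ (tperm x y z) * wAB om z = hPQ z * wAB om z
    + ((x == z)%:R * ((hPQ y - hPQ x) * wAB om x) + (y == z)%:R * ((hPQ x - hPQ y) * wAB om y)).
  have [<-|xz] := eqVneq x z; first by rewrite tpermL eq_sym (negbTE xy) /=; ring.
  have [<-|yz] := eqVneq y z; first by rewrite tpermR /=; ring.
  by rewrite tpermD //=; ring.
rewrite (eq_bigr _ (fun z _ => hPQ_tperm z)) !big_split /= !sum_delta /swap_gain /=; ring.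
Qed.

Fixpoint swap_avg (s : seq (T * T)) (G : {set T} * {set T} -> R) om : R :=
  if s is p :: s' then (swap_avg s' G om + swap_avg s' G (relabel (tperm p.1 p.2) om)) / 2
  else G om.

Lemma sum_swap_avg s G : \sum_(om in Om) swap_avg s G om = \sum_(om in Om) G om.
Proof.
elim: s => [|p s IH] //=.
by rewrite -mulr_suml big_split /= -(sum_relabel_tperm a b p.1 p.2) IH; field.
Qed.

(* When the transpositions have disjoint supports, their effects on [zstat]
   add up independently. *)
Lemma swap_avg_subsum s (phi : R -> R) om : uniq (unzip1 s ++ unzip2 s) ->
  swap_avg s (phi \o zstat) om
  = subsum_avg [seq swap_gain p om | p <- s] (fun y => phi (zstat om + y)).
Proof.
elim: s om => [|p s IH] om /=; first by rewrite addr0.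
rewrite -(cat1s p.2) uniq_catCA cat1s /= => /and3P[p1_fresh p2_fresh uniq_s].
rewrite !IH //.
have p12 : p.1 != p.2 by apply: contraNneq p1_fresh => ->; rewrite mem_cat mem_head orbT.
have fixed z : z \in unzip1 s ++ unzip2 s -> tperm p.1 p.2 z = z.
  move=> zs; rewrite tpermD //; last by apply: contraNneq p2_fresh => ->.
  by apply: contraNneq p1_fresh => ->; move: zs; rewrite !mem_cat inE => /orP[]->; rewrite ?orbT.
have -> : [seq swap_gain q (relabel (tperm p.1 p.2) om) | q <- s]
          = [seq swap_gain q om | q <- s].
  apply/eq_in_map => q qs.
  have q1s : q.1 \in unzip1 s ++ unzip2 s by rewrite mem_cat map_f.
  have q2s : q.2 \in unzip1 s ++ unzip2 s by rewrite mem_cat map_f ?orbT.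
  by rewrite /swap_gain !wAB_relabel !fixed.
rewrite zstat_relabel_tperm //; congr ((_ + _) / 2).
by apply: eq_subsum_avg => y; rewrite -addrA; case: p {p1_fresh p2_fresh p12 fixed}.
Qed.

End Swaps.

Section AntiConcentration.
Variables (R : rcfType) (n a b : nat) (P Q : {set 'I_n}) (eta : R).
Local Notation T := 'I_n.
Local Notation Om := (disj_pairs n a b).
Local Notation cOm := (#|Om|%:R : R).
Local Notation indic := (indic R).
Local Notation hPQ := (hPQ R P Q).
Local Notation zstat := (zstat R P Q).
Local Notation swap_gain := (swap_gain R P Q).
Local Notation gains om := [seq swap_gain p om | p <- pairing P].

Hypotheses (PQ : [disjoint P & Q]) (n_gt1 : (1 < n)%N).
Hypotheses (le_ba : (b <= a)%N) (abn : (a + b <= n)%N).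

Lemma a_le_n : (a <= n)%N. Proof. lia. Qed.

Lemma n_gt0 : 0 < n%:R :> R.
Proof. by rewrite ltr0n ltnW. Qed.

Definition zmean : R := (a%:R - b%:R) / n%:R * \sum_z hPQ z.

Lemma zstat_linstat om : zstat om = linstat true hPQ om - linstat false hPQ om.
Proof. by rewrite /zstat /linstat -sumrB; apply: eq_bigr => z _; rewrite /wAB /=; ring. Qed.

Lemma sum_zstat_centered : \sum_(om in Om) (zstat om - zmean) = 0.
Proof.
under eq_bigr do rewrite zstat_linstat.
rewrite !sumrB !sum_linstat sumr_const -[zmean *+ _]mulr_natr /zmean /=; ring.
Qed.

Lemma hPQ_sq_le1 z : hPQ z ^+ 2 <= 1.
Proof. by rewrite /hPQ /indic; case: (z \in P); case: (z \in Q); rewrite /= ?expr2; lra. Qed.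

Lemma sum_zstat_centered_sq : \sum_(om in Om) (zstat om - zmean) ^+ 2 <= 4 * a%:R * cOm.
Proof.
set S := \sum_z hPQ z.
have var_le sel : (side_size a b sel <= n)%N ->
    \sum_(om in Om) (linstat sel hPQ om - (side_size a b sel)%:R / n%:R * S) ^+ 2
    <= (side_size a b sel)%:R * cOm.
  move=> kn; apply: le_trans (linstat_var _ n_gt1 kn) _.
  have sum_sq : \sum_z hPQ z ^+ 2 <= n%:R.
    by rewrite -[n in n%:R]card_ord -sumr_const; apply: ler_sum => z _; apply: hPQ_sq_le1.
  have k_ge0 : 0 <= (side_size a b sel)%:R / n%:R * cOm :> R by rewrite !mulr_ge0 ?invr_ge0.
  apply: le_trans (ler_wpM2l k_ge0 sum_sq) _.
  by rewrite mulrAC divfK // pnatr_eq0 -lt0n ltnW.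
have := var_le true a_le_n; have := var_le false (leq_trans le_ba a_le_n) => /= varB varA.
set U := fun om => linstat true hPQ om - a%:R / n%:R * S.
set W := fun om => linstat false hPQ om - b%:R / n%:R * S.
have split_sq om : (zstat om - zmean) ^+ 2 <= 2 * U om ^+ 2 + 2 * W om ^+ 2.
  have -> : zstat om - zmean = U om - W om by rewrite /U /W zstat_linstat /zmean -/S; ring.
  by have := sqr_ge0 (U om + W om); lra.
apply: le_trans (ler_sum _ (fun om _ => split_sq om)) _.
rewrite big_split /= -!mulr_sumr.
have : b%:R * cOm <= a%:R * cOm by rewrite ler_wpM2r ?ler_nat.
lra.
Qed.

Lemma zmean_ge0 : (#|Q| <= #|P|)%N -> 0 <= zmean.
Proof.
move=> le_QP; rewrite /zmean sumrB !sum_indic.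
by rewrite !mulr_ge0 ?invr_ge0 ?subr_ge0 ?ler_nat.
Qed.

Lemma hPQ_norm_le1 z : `|hPQ z| <= 1.
Proof. by rewrite ler_norml /hPQ /indic; case: (z \in P); case: (z \in Q); rewrite /=; lra. Qed.

Lemma wAB_sq_le (om : {set T} * {set T}) z : wAB R om z ^+ 2 <= indic z (om.1 :|: om.2).
Proof. by rewrite /wAB /indic inE; case: (z \in om.1); case: (z \in om.2); rewrite /= ?expr2; lra. Qed.

Lemma swap_gain_sq_le p om :
  (swap_gain p om / 2) ^+ 2 <= 2 * (indic p.1 (om.1 :|: om.2) + indic p.2 (om.1 :|: om.2)).
Proof.
have hdiff : ((hPQ p.1 - hPQ p.2) / 2) ^+ 2 <= 1.
  have := hPQ_norm_le1 p.1; have := hPQ_norm_le1 p.2; rewrite !ler_norml; nra.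
have := wAB_sq_le om p.1; have := wAB_sq_le om p.2.
have wdiff : (wAB R om p.2 - wAB R om p.1) ^+ 2
             <= 2 * wAB R om p.1 ^+ 2 + 2 * wAB R om p.2 ^+ 2.
  by have := sqr_ge0 (wAB R om p.2 + wAB R om p.1); lra.
have -> : (swap_gain p om / 2) ^+ 2
          = (wAB R om p.2 - wAB R om p.1) ^+ 2 * ((hPQ p.1 - hPQ p.2) / 2) ^+ 2.
  by rewrite /swap_gain; field.
have := ler_wpM2l (sqr_ge0 (wAB R om p.2 - wAB R om p.1)) hdiff.
lra.
Qed.

(* The left side is the indicator that exactly one of [x], [y] lies in [A];
   the swap then changes [Z] by at least [1]. *)
Lemma swap_gain_sq_ge om x y : om \in Om -> x \in P -> y \notin P ->
  (indic x om.1 - indic y om.1) ^+ 2 <= swap_gain (x, y) om ^+ 2.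
Proof.
rewrite inE => /and3P[_ _]; case: om => A B /= disjAB xP yP.
have xQ : (x \in Q) = false := disjointFr PQ xP.
have hdiff : 1 <= (hPQ x - hPQ y) ^+ 2.
  by rewrite /hPQ /indic xP xQ (negbTE yP); case: (y \in Q); rewrite /= ?expr2; lra.
have wdiff : (indic x A - indic y A) ^+ 2 <= (wAB R (A, B) y - wAB R (A, B) x) ^+ 2.
  rewrite /wAB /indic /=.
  case xA: (x \in A); case yA: (y \in A); rewrite /= ?subrr ?expr0n ?sqr_ge0 //.
  - by rewrite (disjointFr disjAB xA); case: (y \in B); rewrite /= ?expr2; lra.
  - by rewrite (disjointFr disjAB yA); case: (x \in B); rewrite /= ?expr2; lra.
rewrite /swap_gain /= exprMn.
have := ler_wpM2l (sqr_ge0 (wAB R (A, B) y - wAB R (A, B) x)) hdiff.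
lra.
Qed.

Lemma subsum_var_gains_le om : om \in Om -> subsum_var (gains om) <= 4 * a%:R.
Proof.
move=> om_in; rewrite /subsum_var big_map.
apply: le_trans (ler_sum _ (fun p _ => swap_gain_sq_le p om)) _.
rewrite -mulr_sumr.
have := @sum_pairs_le _ _ _ (fun z => indic z (om.1 :|: om.2)) (pairing_uniq P) (fun z => ler0n _ _).
rewrite sum_indic => sum_le.
have : #|om.1 :|: om.2|%:R <= a%:R + b%:R :> R.
  move: om_in; rewrite inE => /and3P[/eqP cA /eqP cB _].
  by rewrite -natrD ler_nat -cA -cB leq_card_setU.
have : b%:R <= a%:R :> R by rewrite ler_nat.
lra.
Qed.

Hypotheses (eta_gt0 : 0 < eta) (P_ge : eta * n%:R <= #|P|%:R).
Hypotheses (P_le : #|P|%:R <= (1 - eta) * n%:R) (a_le : a%:R <= (1 - eta) * n%:R).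

Lemma sum_swap_gain_sq_ge x y : x \in P -> y \notin P ->
  cOm * (a%:R / n%:R) * eta / 2 <= \sum_(om in Om) (swap_gain (x, y) om / 2) ^+ 2.
Proof.
move=> xP yP; have xy : x != y by apply: contraNneq yP => <-.
set r : R := a%:R / n%:R.
have sq_ge : \sum_(om in Om) (indic x om.1 + indic y om.1 - 2 * (indic x om.1 * indic y om.1)) / 4
             <= \sum_(om in Om) (swap_gain (x, y) om / 2) ^+ 2.
  apply: ler_sum => om om_in.
  have -> : (swap_gain (x, y) om / 2) ^+ 2 = swap_gain (x, y) om ^+ 2 / 4 by field.
  rewrite ler_pM2r ?invr_gt0 //.
  apply: le_trans (swap_gain_sq_ge om_in xP yP).
  have idem u : indic u om.1 ^+ 2 = indic u om.1 by rewrite expr2 indicM_id.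
  by rewrite sqrrB !idem; lra.
apply: le_trans sq_ge.
have := cnt1E R a b true x; have := cnt1E R a b true y; have := @cnt2_le R _ a b true _ _ xy a_le_n.
rewrite /cnt1 /cnt2 /side /= => cnt2_le cnt1y cnt1x.
rewrite -mulr_suml !sumrB big_split /= -mulr_sumr cnt1x cnt1y -/r.
have r_ge0 : 0 <= r by rewrite divr_ge0 ?ler0n.
have r_le : r <= 1 - eta by rewrite ler_pdivrMr ?n_gt0.
have cOm_ge0 : 0 <= cOm by rewrite ler0n.
have : 0 <= cOm * r * (1 - r - eta) by apply: mulr_ge0; [exact: mulr_ge0 | lra].
rewrite -/r in cnt2_le; nra.
Qed.

Lemma size_pairing_ge : eta * n%:R <= (size (pairing P))%:R.
Proof.
have P_n : (#|P| <= n)%N by rewrite -[n in (_ <= n)%N]card_ord max_card.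
have cardCP : #|~: P|%:R = n%:R - #|P|%:R :> R by rewrite cardsCs setCK card_ord natrB.
move: P_ge P_le; rewrite size_pairing /minn; case: ifP => _; rewrite ?cardCP; lra.
Qed.

Lemma sum_subsum_var_gains_ge :
  eta ^+ 2 * a%:R * cOm / 2 <= \sum_(om in Om) subsum_var (gains om).
Proof.
rewrite /subsum_var; under eq_bigr do rewrite big_map.
rewrite exchange_big /=.
set c := cOm * (a%:R / n%:R) * eta / 2.
have c_ge0 : 0 <= c by rewrite /c !(mulr_ge0, divr_ge0) ?invr_ge0 ?ler0n // ltW.
have : \sum_(p <- pairing P) c
        <= \sum_(p <- pairing P) \sum_(om in Om) (swap_gain p om / 2) ^+ 2.
  rewrite big_seq [leRHS]big_seq.
  by apply: ler_sum => -[x y] /mem_pairing[xP yP]; apply: sum_swap_gain_sq_ge.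
rewrite big_const_seq count_predT iter_addr_0 -[c *+ _]mulr_natr; apply: le_trans.
rewrite (_ : eta ^+ 2 * a%:R * cOm / 2 = c * (eta * n%:R)); last first.
  by rewrite /c; field; rewrite gt_eqF ?n_gt0.
by rewrite ler_wpM2l // size_pairing_ge.
Qed.

Lemma sum_norm_zstat_centered_ge : (0 < a)%N ->
  eta ^+ 2 / 8 * Num.sqrt a%:R * cOm <= \sum_(om in Om) `|zstat om - zmean|.
Proof.
move=> a_gt0; set s := Num.sqrt a%:R.
have s_gt0 : 0 < s by rewrite sqrtr_gt0 ltr0n.
have s2 : s ^+ 2 = a%:R by rewrite sqr_sqrtr ?ler0n.
have L_gt0 : 0 < 4 * s by rewrite mulr_gt0.
rewrite -(sum_swap_avg a b (pairing P)).
have avg_ge om : om \in Om ->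
    9 / (8 * (4 * s)) * subsum_var (gains om)
    <= swap_avg (pairing P) (fun o => `|zstat o - zmean|) om.
  move=> om_in.
  rewrite (swap_avg_subsum P Q (fun x => `|x - zmean|) om (pairing_uniq P)).
  rewrite (@eq_subsum_avg _ _ _ (fun y => `|zstat om - zmean + y|)) => [|y]; last by rewrite addrAC.
  apply: subsum_avg_norm_ge => //.
  have -> : (4 * s) ^+ 2 / 4 = 4 * a%:R by rewrite exprMn s2; field.
  exact: subsum_var_gains_le.
apply: le_trans (ler_sum _ avg_ge); rewrite -mulr_sumr.
have k_ge0 : 0 <= 9 / (8 * (4 * s)) by rewrite divr_ge0 // ltW // mulr_gt0.
have := ler_wpM2l k_ge0 sum_subsum_var_gains_ge.
have -> : 9 / (8 * (4 * s)) * (eta ^+ 2 * a%:R * cOm / 2) = 9 / 64 * (eta ^+ 2 * s * cOm).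
  by rewrite -s2; field; rewrite gt_eqF.
have : 0 <= eta ^+ 2 * s * cOm by rewrite !mulr_ge0 ?sqr_ge0 ?ler0n ?ltW.
lra.
Qed.

Lemma card_zstat_centered_ge : (0 < a)%N ->
  (eta ^+ 2 / 16) ^+ 2 / 16 * cOm
  <= #|[set om in Om | eta ^+ 2 / 32 * Num.sqrt a%:R <= zstat om - zmean]|%:R.
Proof.
move=> a_gt0; set s := Num.sqrt a%:R.
have s_gt0 : 0 < s by rewrite sqrtr_gt0 ltr0n.
have sigma_gt0 : 0 < 2 * s by rewrite mulr_gt0.
have kap_gt0 : 0 < eta ^+ 2 / 16 by rewrite divr_gt0 ?exprn_gt0.
have sum_sq : \sum_(om in Om) (zstat om - zmean) ^+ 2 <= (2 * s) ^+ 2 * cOm.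
  have -> : (2 * s) ^+ 2 = 4 * a%:R by rewrite exprMn sqr_sqrtr ?ler0n //; ring.
  exact: sum_zstat_centered_sq.
have sum_abs : eta ^+ 2 / 16 * (2 * s) * cOm <= \sum_(om in Om) `|zstat om - zmean|.
  have -> : eta ^+ 2 / 16 * (2 * s) = eta ^+ 2 / 8 * s by field.
  exact: sum_norm_zstat_centered_ge.
have := card_upper_tail_ge (X := fun om => zstat om - zmean)
  sigma_gt0 kap_gt0 sum_zstat_centered sum_sq sum_abs.
by have -> : eta ^+ 2 / 16 * (2 * s) / 4 = eta ^+ 2 / 32 * s by field.
Qed.

Lemma zstat_set0 : zstat (set0, set0) = 0.
Proof. by rewrite /zstat big1 // => z _; rewrite /wAB /indic !inE subrr mulr0. Qed.

Lemma card_zstat_ge : (#|Q| <= #|P|)%N ->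
  (eta ^+ 2 / 16) ^+ 2 / 16 * cOm
  <= #|[set om in Om | (eta ^+ 2 / 16) ^+ 2 / 16 * Num.sqrt a%:R <= zstat om]|%:R.
Proof.
move=> le_QP; set rho := (eta ^+ 2 / 16) ^+ 2 / 16.
have eta_le : eta <= 1 / 2.
  have : eta * n%:R <= (1 - eta) * n%:R := le_trans P_ge P_le.
  by rewrite ler_pM2r ?n_gt0 //; lra.
have eta2_le1 : eta ^+ 2 <= 1 by rewrite expr2; move: eta_gt0; nra.
have rho_le : rho <= eta ^+ 2 / 32.
  by rewrite /rho; move: (eta ^+ 2) (sqr_ge0 eta) eta2_le1 => e e_ge0 e_le1; rewrite expr2; nra.
have [a0|a_gt0] := posnP a.
  have -> : [set om in Om | rho * Num.sqrt a%:R <= zstat om] = Om.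
    apply/setP => -[A B]; rewrite !inE a0 (_ : b = 0%N); last lia.
    apply/andb_idr => /and3P[/eqP/cards0_eq /= A0 /eqP/cards0_eq /= B0 _].
    by rewrite A0 B0 zstat_set0 sqrtr0 mulr0.
  rewrite ler_piMl ?ler0n //; lra.
apply: le_trans (card_zstat_centered_ge a_gt0) _.
rewrite ler_nat subset_leq_card //; apply/subsetP => om; rewrite !inE => /andP[-> /=].
have := zmean_ge0 le_QP; have := ler_wpM2r (sqrtr_ge0 a%:R) rho_le; lra.
Qed.

End AntiConcentration.

Theorem lemma2p12 (R : realType) (eta : R) :
  0 < eta ->
  exists rho : R, 0 < rho /\
  exists n0 : nat, forall n : nat, (n0 <= n)%N ->
  forall P Q : {set 'I_n}, [disjoint P & Q] ->
  (#|Q|%:R / n%:R <= #|P|%:R / n%:R :> R) ->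
  eta <= #|P|%:R / n%:R <= 1 - eta ->
  forall a b : nat, (b <= a)%N -> (a%:R <= (1 - eta) * n%:R :> R) ->
  (a + b <= n)%N ->
  rho <= @unif_prob R n a b
           (fun AB => rho * Num.sqrt (a%:R) <= (Zstat P Q AB.1 AB.2)%:~R).
Proof.
move=> eta_gt0; exists ((eta ^+ 2 / 16) ^+ 2 / 16).
split; first by rewrite !divr_gt0 ?exprn_gt0 ?divr_gt0 ?exprn_gt0.
exists 2%N => n n_gt1 P Q PQ le_QP /andP[P_ge P_le] a b le_ba a_le abn.
have n_gt0 : 0 < n%:R :> R by rewrite ltr0n ltnW.
rewrite ler_pM2r ?invr_gt0 // ler_nat in le_QP.
rewrite ler_pdivlMr // in P_ge; rewrite ler_pdivrMr // in P_le.
rewrite /unif_prob ler_pdivlMr ?ltr0n ?card_disj_pairs_gt0 //.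
apply: le_trans (card_zstat_ge PQ n_gt1 le_ba abn eta_gt0 P_ge P_le a_le le_QP) _.
rewrite ler_nat subset_leq_card //; apply/subsetP => -[A B].
by rewrite !inE Zstat_zstat.
Qed.
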